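(* Let $r\ge1$ and let $\sigma=(1,1,\ldots,1)$ be the partition of $r$ into $r$ parts equal to $1$. Let $H=H(n,r,q\mid\sigma)$ with $n\ge(r+1)^2$ and $q\ge r$. Then $H$ has a maximum matching leaving exactly $p$ vertices unmatched, where $p$ is the remainder of $nq$ upon division by $r$; hence $\nu(H)=\left\lfloor\frac{nq}{r}\right\rfloor$.
   Context: A $\sigma$-hypergraph $H=H(n,r,q\mid\sigma)$, for a partition $\sigma$ of $r$, is the $r$-uniform hypergraph whose vertex set is the disjoint union of $n$ classes $V_1,\ldots,V_n$, each of size $q$; an $r$-subset $K$ of vertices is an edge iff the multiset of non-zero values $|K\cap V_i|$ equals $\sigma$ (so for $\sigma=(1,\ldots,1)$ the edges are the $r$-sets meeting $r$ distinct classes in one vertex each). A matching is a set of pairwise vertex-disjoint edges; $\nu(H)$ is the maximum size of a matching. *)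

From mathcomp Require Import all_boot.
Unset Printing Implicit Defensive.

(* Vertices of H(n,r,q|sigma): pairs (i, j), i the class index (< n), j the
   position inside class V_i (< q). *)
Definition vtx (n q : nat) : finType := ('I_n * 'I_q)%type.

Definition vclass (n q : nat) (i : 'I_n) : {set vtx n q} := [set x | x.1 == i].

Definition sigma_edge (n r q : nat) (sigma : seq nat) (K : {set vtx n q}) : bool :=
  (#|K| == r) &&
  perm_eq [seq c <- [seq #|K :&: vclass n q i| | i <- enum 'I_n] | c != 0] sigma.

Definition is_matching (n r q : nat) (sigma : seq nat) (M : {set {set vtx n q}}) : bool :=
  [forall K in M, sigma_edge n r q sigma K] &&
  [forall K1 in M, forall K2 in M, (K1 != K2) ==> [disjoint K1 & K2]].

Definition nu (n r q : nat) (sigma : seq nat) : nat :=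
  \max_(M : {set {set vtx n q}} | is_matching n r q sigma M) #|M|.

Definition unmatched (n q : nat) (M : {set {set vtx n q}}) : nat :=
  #|~: cover M|.

From mathcomp Require Import all_boot.

Set Implicit Arguments.
Unset Strict Implicit.

(* A matching covers #|M| * r vertices, so #|M| <= nq/r.  Conversely, list the
   vertices as k |-> (k mod n, k div n) and cut the list into consecutive
   blocks of r; since r <= n, the r vertices of a block lie in distinct
   classes, so the blocks form a matching of size nq/r leaving nq mod r
   vertices uncovered. *)

Lemma size_filter_neq0_01 (s : seq nat) :
  all (fun c => c <= 1) s -> size [seq c <- s | c != 0] = sumn s.
Proof.
elim: s => [|c s IHs] //= /andP[c_le1 s_le1].
by case: c c_le1 => [|[|c]] //= _; rewrite IHs.
Qed.

Lemma sum_card_setI_vclass n q (K : {set vtx n q}) :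
  \sum_(i < n) #|K :&: vclass n q i| = #|K|.
Proof.
rewrite [RHS]cardE -sum1_size big_enum /=.
rewrite (partition_big (fun x : vtx n q => x.1) xpredT) //=.
apply: eq_bigr => i _; rewrite cardE -sum1_size big_enum.
by apply: eq_bigl => x; rewrite !inE.
Qed.

Lemma sigma_edge_transversal n q r (K : {set vtx n q}) :
  #|K| = r -> {in K &, injective (fun x => x.1)} -> sigma_edge n r q (nseq r 1) K.
Proof.
move=> cardK injK; rewrite /sigma_edge cardK eqxx /=.
set s := [seq _ | i <- enum 'I_n].
have s_le1 : all (fun c => c <= 1) s.
  apply/allP => _ /mapP[i _ ->]; apply/card_le1_eqP => x y.
  by rewrite !inE => /andP[xK /eqP xi] /andP[yK /eqP yi]; apply: injK; rewrite ?xi ?yi.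
have sum_s : sumn s = r by rewrite sumnE big_map big_enum sum_card_setI_vclass.
have all1 : all (pred1 1) [seq c <- s | c != 0].
  apply/allP => c; rewrite mem_filter => /andP[c_neq0 cs].
  by move/allP/(_ c cs): s_le1; case: c c_neq0 {cs} => [|[|c]].
by rewrite (all_pred1P _ _ all1) size_filter_neq0_01 // sum_s perm_refl.
Qed.

Section MatchingCount.

Variables (n r q : nat) (sigma : seq nat).

Lemma card_cover_matching (M : {set {set vtx n q}}) :
  is_matching n r q sigma M -> #|cover M| = #|M| * r.
Proof.
case/andP=> /forallP edgeM /forallP disjM.
have trivM : trivIset M.
  apply/trivIsetP => A B AM BM neqAB.
  by move/implyP/(_ AM)/forallP/(_ B): (disjM A); rewrite BM neqAB.
rewrite -(eqP trivM) -sum_nat_const; apply: eq_bigr => K KM.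
by move/implyP/(_ KM)/andP: (edgeM K) => [/eqP].
Qed.

Lemma card_vtx : #|vtx n q| = n * q.
Proof. by rewrite card_prod !card_ord. Qed.

Lemma card_matching_le (M : {set {set vtx n q}}) :
  0 < r -> is_matching n r q sigma M -> #|M| <= n * q %/ r.
Proof.
move=> r_gt0 matchM; rewrite leq_divRL // -(card_cover_matching matchM) -card_vtx.
exact: max_card.
Qed.

Lemma unmatched_matching (M : {set {set vtx n q}}) :
  is_matching n r q sigma M -> unmatched n q M = n * q - #|M| * r.
Proof.
by move=> matchM; rewrite /unmatched cardsCs setCK card_vtx card_cover_matching.
Qed.

End MatchingCount.

Section BlockMatching.

(* Classes and positions are indexed by [n.+1] and [q.+1] so that [inord] is
   available; [vert k] is meaningful for [k < n.+1 * q.+1]. *)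
Variables (n q r : nat).
Hypotheses (r_gt0 : 0 < r) (r_le_n : r <= n.+1).

Definition vert (k : nat) : vtx n.+1 q.+1 := (inord (k %% n.+1), inord (k %/ n.+1)).

Lemma vert_inj : {in gtn (n.+1 * q.+1) &, injective vert}.
Proof.
move=> k l; rewrite !unfold_in => k_lt l_lt [/(congr1 val) eq_mod /(congr1 val) eq_div].
have mod_lt m : m %% n.+1 < n.+1 by rewrite ltn_pmod.
have div_lt m : m < n.+1 * q.+1 -> m %/ n.+1 < q.+1 by rewrite ltn_divLR // mulnC.
rewrite /= !inordK ?mod_lt ?div_lt // in eq_mod eq_div.
by rewrite (divn_eq k n.+1) (divn_eq l n.+1) eq_mod eq_div.
Qed.

Let nblocks := n.+1 * q.+1 %/ r.

Definition block (t : nat) : {set vtx n.+1 q.+1} := [set vert (t * r + a) | a : 'I_r].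

Definition block_matching : {set {set vtx n.+1 q.+1}} := [set block t | t : 'I_nblocks].

Lemma block_index_lt t a : t < nblocks -> a < r -> t * r + a < n.+1 * q.+1.
Proof.
move=> t_lt a_lt; apply: leq_trans (leq_divM _ r).
apply: (@leq_trans (t.+1 * r)); first by rewrite mulSnr ltn_add2l.
by rewrite leq_mul2r t_lt orbT.
Qed.

Lemma vert_block_inj (t s : 'I_nblocks) (a b : 'I_r) :
  vert (t * r + a) = vert (s * r + b) -> t = s /\ a = b.
Proof.
move/(vert_inj (block_index_lt (ltn_ord t) (ltn_ord a))
              (block_index_lt (ltn_ord s) (ltn_ord b))) => eq_idx.
have eq_t := congr1 (divn^~ r) eq_idx; have eq_a := congr1 (modn^~ r) eq_idx.
rewrite /= !divnMDl // !divn_small // !addn0 in eq_t.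
rewrite /= !modnMDl !modn_small // in eq_a.
by split; apply: val_inj.
Qed.

Lemma card_block (t : 'I_nblocks) : #|block t| = r.
Proof. by rewrite card_imset ?card_ord // => a b /vert_block_inj[]. Qed.

(* Within a block the indices differ by less than r <= n.+1, hence so do
   their residues mod n.+1. *)
Lemma block_transversal (t : 'I_nblocks) : {in block t &, injective (fun x => x.1)}.
Proof.
move=> _ _ /imsetP[a _ ->] /imsetP[b _ ->] /(congr1 val) /=.
have a_lt : a < n.+1 := leq_trans (ltn_ord a) r_le_n.
have b_lt : b < n.+1 := leq_trans (ltn_ord b) r_le_n.
rewrite !inordK ?ltn_pmod // => /eqP; rewrite eqn_modDl !modn_small // => /eqP ab.
by congr vert; rewrite ab.
Qed.

Lemma block_matching_is_matching : is_matching n.+1 r q.+1 (nseq r 1) block_matching.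
Proof.
apply/andP; split; apply/forallP => K; apply/implyP => /imsetP[t _ ->].
  exact: sigma_edge_transversal (card_block t) (@block_transversal t).
apply/forallP => K'; apply/implyP => /imsetP[s _ ->]; apply/implyP => neq_ts.
apply/pred0P => x /=; apply/negbTE/andP.
case=> /imsetP[a _ ->] /imsetP[b _ /vert_block_inj[eq_ts _]].
by rewrite eq_ts eqxx in neq_ts.
Qed.

Lemma card_block_matching : #|block_matching| = nblocks.
Proof.
rewrite card_imset ?card_ord // => t s eq_block.
have : vert (t * r + 0) \in block s by rewrite -eq_block; apply/imsetP; exists (Ordinal r_gt0).
by case/imsetP=> b _ /(@vert_block_inj t s (Ordinal r_gt0))[].
Qed.

End BlockMatching.

Theorem lemma3p6 (n r q : nat) :
  1 <= r -> (r + 1) ^ 2 <= n -> r <= q ->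
  (exists M : {set {set vtx n q}},
      [/\ is_matching n r q (nseq r 1) M,
          (forall M' : {set {set vtx n q}}, is_matching n r q (nseq r 1) M' -> #|M'| <= #|M|)
        & unmatched n q M = (n * q) %% r])
  /\ nu n r q (nseq r 1) = (n * q) %/ r.
Proof.
move=> r_gt0 n_ge r_le_q.
have r_le_n : r <= n.
  by apply: leq_trans n_ge; rewrite addn1 (leq_trans (leqnSn r)) // leq_pmulr.
case: n r_le_n {n_ge} => [|n] r_le_n; first by move: (leq_trans r_gt0 r_le_n).
case: q r_le_q => [|q] r_le_q; first by move: (leq_trans r_gt0 r_le_q).
have matchB := block_matching_is_matching q r_gt0 r_le_n.
have cardB := card_block_matching n q r_gt0.
have maxB M' : is_matching n.+1 r q.+1 (nseq r 1) M' -> #|M'| <= #|block_matching n q r|.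
  by rewrite cardB; apply: card_matching_le.
split.
  exists (block_matching n q r); split=> //.
  by rewrite (unmatched_matching matchB) cardB {1}(divn_eq (n.+1 * q.+1) r) addKn.
apply/eqP; rewrite /nu -cardB eqn_leq (leq_bigmax_cond _ matchB) andbT.
exact/bigmax_leqP.
Qed.
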